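(* LexiPS is not sd-weakly-strategyproof if agents may misreport their importance orders: there is a multi-type resource allocation problem with $n=2$ agents and $p=3$ types $F,B,T$, with $D_F=\{1_F,2_F\}$, $D_B=\{1_B,2_B\}$, $D_T=\{1_T,2_T\}$, where both agents have lexicographic preferences with $1_i\rhd^i_j 2_i$ for all types $i$ and both agents $j$, agent 1 has importance order $F\rhd_1 B\rhd_1 T$ and agent 2 has importance order $T\rhd_2 F\rhd_2 B$, such that if agent 2 reports instead the lexicographic preference with the same per-type orders and importance order $F\rhd B\rhd T$ replaced by $F\rhd T\rhd B$, then agent 2's resulting LexiPS allocation weakly stochastically dominates her truthful LexiPS allocation w.r.t. her true preference and differs from it.
   Context: Setting: $N=\{1,\dots,n\}$ agents; $M=D_1\cup\dots\cup D_p$ items with pairwise disjoint types, $|D_i|=n$, unit supply; bundles $\mathcal D=D_1\times\dots\times D_p$, $x_i$ the type-$i$ component. Lexicographic preference: agent $j$ has an importance order $\rhd_j$ over types and orders $\rhd^i_j$ on each $D_i$; $x\succ_j y$ iff there is a type $i$ with $x_i\rhd^i_j y_i$ and $x_{i'}=y_{i'}$ for all $i'\rhd_j i$. $U(\succ,x)=\{y:y\succ x\}\cup\{x\}$; $p$ weakly stochastically dominates $q$ w.r.t. $\succ$ if $\sum_{y\in U(\succ,x)}p_y\ge\sum_{y\in U(\succ,x)}q_y$ for all $x$. LexiPS: remaining supplies start at $1$ and carry across phases. In phase $k=1,\dots,p$ (unit duration each), each agent $j$ eats at rate $1$ her $\rhd^i_j$-most-preferred item with positive remaining supply among items of her $k$-th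 most important type $i$. With $s^i_{j,o}$ the amount of $o\in D_i$ eaten by $j$, the output is $p_{j,x}=\prod_i s^i_{j,x_i}$. *)

From mathcomp Require Import all_boot all_order all_algebra all_fingroup.
Set Implicit Arguments. Unset Strict Implicit. Unset Printing Implicit Defensive.
Import Order.TTheory GRing.Theory Num.Theory.
Local Open Scope ring_scope.

(* Agents are 'I_n, types are 'I_p, the items of each type D_i are indexed by
   'I_n (so |D_i| = n).  A bundle picks one item of each type. *)
Definition bundle (n p : nat) := {ffun 'I_p -> 'I_n}.

(* Lexicographic preference:
   imp k       = the k-th most important type (k = 0 is the most important);
   rank i o    = position of item o in the order |>^i on D_i (0 = best).
   Both maps are injective, hence bijective (strict linear orders). *)
Record lexpref (n p : nat) := LexPref {
  imp : 'I_p -> 'I_p;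
  imp_inj : injective imp;
  rank : 'I_p -> 'I_n -> 'I_n;
  rank_inj : forall i, injective (rank i)
}.

Section Lex.
Variables (n p : nat).
Implicit Types (P : lexpref n p) (x y : bundle n p).

Definition item_better P (i : 'I_p) (o o' : 'I_n) : bool :=
  (rank P i o < rank P i o')%N.

Definition lex_pref P x y : bool :=
  [exists k : 'I_p, item_better P (imp P k) (x (imp P k)) (y (imp P k)) &&
     [forall k' : 'I_p, (k' < k)%N ==> (x (imp P k') == y (imp P k'))]].

Definition upset P x : {set bundle n p} := [set y | lex_pref P y x] :|: [set x].

Definition sd_weak P (f g : {ffun bundle n p -> rat}) : Prop :=
  forall x, \sum_(y in upset P x) g y <= \sum_(y in upset P x) f y.

Definition supplyT := {ffun 'I_p -> {ffun 'I_n -> rat}}.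
Definition eatenT := {ffun 'I_n -> {ffun 'I_p -> {ffun 'I_n -> rat}}}.
(* state: remaining time in the current phase, remaining supplies, amounts eaten *)
Definition stateT := (rat * supplyT * eatenT)%type.

Definition target P (sup : supplyT) (t : 'I_p) : option 'I_n :=
  [pick o : 'I_n | (0 < sup t o) &&
        [forall o' : 'I_n, (0 < sup t o') ==> (rank P t o <= rank P t o')%N]].

(* one event of phase k: every agent eats its current target at rate 1 until
   either some eaten item is exhausted or the phase ends *)
Definition ps_step (prof : 'I_n -> lexpref n p) (k : 'I_p) (st : stateT) : stateT :=
  let: (tau, sup, eat) := st in
  let ty j := imp (prof j) k in
  let tgt j := target (prof j) sup (ty j) in
  let cnt t o := #|[set j : 'I_n | (ty j == t) && (tgt j == Some o)]| in
  let delta := \big[Num.min/tau]_(t : 'I_p)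
                 \big[Num.min/tau]_(o : 'I_n | cnt t o != 0%N)
                    (sup t o / (cnt t o)%:R) in
  (tau - delta,
   [ffun t => [ffun o => sup t o - (cnt t o)%:R * delta]],
   [ffun j => [ffun t => [ffun o => eat j t o +
       (if (t == ty j) && (tgt j == Some o) then delta else 0)]]]).

(* a phase has unit duration; at most n*p items can be exhausted, so n*p+1
   events suffice (afterwards the remaining time is 0 and steps are no-ops) *)
Definition ps_phase prof (k : 'I_p) (st : stateT) : stateT :=
  let: (_, sup, eat) := st in
  iter (n * p).+1 (ps_step prof k) (1, sup, eat).

Definition lexips_eaten (prof : 'I_n -> lexpref n p) : eatenT :=
  (foldl (fun st k => ps_phase prof k st)
         ((1 : rat), [ffun _ => [ffun _ => 1]], [ffun _ => [ffun _ => [ffun _ => 0]]]) (enum 'I_p)).2.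

Definition lexips (prof : 'I_n -> lexpref n p) (j : 'I_n) : {ffun bundle n p -> rat} :=
  [ffun x : bundle n p => \prod_(i : 'I_p) lexips_eaten prof j i (x i)].

End Lex.

(* ---- the concrete instance: n = 2, p = 3 ----
   types F = 0, B = 1, T = 2; items 1_i = 0, 2_i = 1; agent 1 = 0, agent 2 = 1 *)
Definition typF : 'I_3 := @Ordinal 3 0 isT.
Definition typB : 'I_3 := @Ordinal 3 1 isT.
Definition typT : 'I_3 := @Ordinal 3 2 isT.

Definition imp_fun (a b c : 'I_3) (k : 'I_3) : 'I_3 :=
  match val k with 0 => a | 1 => b | _ => c end.

Lemma imp_FBT_inj : injective (imp_fun typF typB typT).
Proof. by move=> [[|[|[|?]]] ?] [[|[|[|?]]] ?] //= _; apply/val_inj. Qed.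
Lemma imp_TFB_inj : injective (imp_fun typT typF typB).
Proof. by move=> [[|[|[|?]]] ?] [[|[|[|?]]] ?] //= _; apply/val_inj. Qed.
Lemma imp_FTB_inj : injective (imp_fun typF typT typB).
Proof. by move=> [[|[|[|?]]] ?] [[|[|[|?]]] ?] //= _; apply/val_inj. Qed.

Definition lex23 (a b c : 'I_3) (H : injective (imp_fun a b c)) : lexpref 2 3 :=
  @LexPref 2 3 (imp_fun a b c) H (fun _ o => o) (fun _ => @inj_id _).

Definition pref_FBT := lex23 imp_FBT_inj.
Definition pref_TFB := lex23 imp_TFB_inj.
Definition pref_FTB := lex23 imp_FTB_inj.

Definition agent1 : 'I_2 := @Ordinal 2 0 isT.
Definition agent2 : 'I_2 := @Ordinal 2 1 isT.

Definition profile2 (P1 P2 : lexpref 2 3) : 'I_2 -> lexpref 2 3 :=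
  fun j => if j == agent1 then P1 else P2.

From mathcomp Require Import all_boot all_order all_algebra all_fingroup.
Set Implicit Arguments. Unset Strict Implicit. Unset Printing Implicit Defensive.
Import Order.TTheory GRing.Theory Num.Theory.
Local Open Scope ring_scope.

(* With two agents, three types F, B, T and 1_i |> 2_i everywhere, agent 1
   (order F > B > T) and a truthful agent 2 (order T > F > B) never compete,
   so agent 2 receives the bundle (2_F, 2_B, 1_T) with probability 1.
   Reporting F > T > B instead, agent 2 competes for 1_F in phase 1 and
   obtains the lottery 1/2 (1_F, 2_B, 1_T) + 1/2 (2_F, 2_B, 1_T).  Since
   (1_F, 2_B, 1_T) is lexicographically better than (2_F, 2_B, 1_T) for her
   true preference, this lottery stochastically dominates the point mass,
   and the two allocations differ. *)

(* The enumeration of 'I_m used by fintype is locked; ord_list is a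
   definition of the same list that evaluates by computation. *)
Fixpoint ord_list m : seq 'I_m :=
  if m is m'.+1 then ord0 :: map (lift ord0) (ord_list m') else [::].

Lemma enum_ord_list m : enum 'I_m = ord_list m.
Proof.
apply: (inj_map val_inj); rewrite val_enum_ord.
elim: m => [|m IHm] //=; rewrite -map_comp -[1%N]/(1 + 0)%N iotaDl IHm -map_comp.
by congr (_ :: _); apply: eq_map.
Qed.

Lemma mem_ord_list m (i : 'I_m) : i \in ord_list m.
Proof. by rewrite -enum_ord_list mem_enum. Qed.

Lemma index_enum_ord_list m : index_enum 'I_m = ord_list m.
Proof. by rewrite /index_enum unlock -enumT enum_ord_list. Qed.

Lemma card_ord_count m (P : pred 'I_m) : #|[set j | P j]| = count P (ord_list m).
Proof. by rewrite cardsE cardE /enum_mem -enumT enum_ord_list size_filter. Qed.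

Lemma pick_ordE m (P : pred 'I_m) : [pick j | P j] = ohead (filter P (ord_list m)).
Proof. by rewrite /pick /enum_mem -enumT enum_ord_list. Qed.

Lemma big_ord_foldr (R : Type) (op : R -> R -> R) idx m (P : pred 'I_m) (F : 'I_m -> R) :
  \big[op/idx]_(i < m | P i) F i = foldr op idx [seq F i | i <- ord_list m & P i].
Proof. by rewrite foldrE big_map big_filter index_enum_ord_list. Qed.

Lemma ord_list_all m (P : pred 'I_m) : all P (ord_list m) -> forall i, P i.
Proof. by move/allP=> allP i; apply: allP; rewrite mem_ord_list. Qed.

Lemma ord_list_all2 m1 m2 (Q : 'I_m1 -> 'I_m2 -> bool) :
  all (fun i => all (Q i) (ord_list m2)) (ord_list m1) -> forall i j, Q i j.
Proof. by move=> allQ i; apply: ord_list_all; apply: ord_list_all allQ i. Qed.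

(* tab f tabulates f : 'I_m -> T as a list, so that its values are computed
   once and shared. *)
Definition tab (T : Type) m (f : 'I_m -> T) : seq T := map f (ord_list m).

Lemma nth_tab (T : Type) m (x0 : T) (f : 'I_m -> T) (i : 'I_m) : nth x0 (tab f) i = f i.
Proof. by rewrite /tab -enum_ord_list (nth_map i) ?size_enum_ord // nth_ord_enum. Qed.

Section ComputableEating.
Variables (n p : nat).

(* Supplies are stored as a table indexed by type and item, amounts eaten
   as a list of such tables indexed by agent. *)
Definition table := seq (seq rat).
Definition cstate := (rat * table * seq table)%type.

Definition cell2 (sup : table) (t o : nat) : rat := nth 0 (nth [::] sup t) o.
Definition cell3 (eat : seq table) (j t o : nat) : rat := cell2 (nth [::] eat j) t o.

Lemma cell2_tab (f : 'I_p -> 'I_n -> rat) (t : 'I_p) (o : 'I_n) :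
  cell2 (tab (fun t => tab (f t))) t o = f t o.
Proof. by rewrite /cell2 !nth_tab. Qed.

Lemma cell3_tab (f : 'I_n -> 'I_p -> 'I_n -> rat) (j : 'I_n) (t : 'I_p) (o : 'I_n) :
  cell3 (tab (fun j => tab (fun t => tab (f j t)))) j t o = f j t o.
Proof. by rewrite /cell3 nth_tab cell2_tab. Qed.

Definition supply_of (sup : table) : supplyT n p :=
  [ffun t : 'I_p => [ffun o : 'I_n => cell2 sup t o]].
Definition eaten_of (eat : seq table) : eatenT n p :=
  [ffun j : 'I_n => [ffun t : 'I_p => [ffun o : 'I_n => cell3 eat j t o]]].
Definition state_of (st : cstate) : stateT n p :=
  (st.1.1, supply_of st.1.2, eaten_of st.2).

Definition ctarget (P : lexpref n p) (sup : table) (t : 'I_p) : option 'I_n :=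
  ohead [seq o : 'I_n <- ord_list n | (0 < cell2 sup t o) &&
    all (fun o' : 'I_n => (0 < cell2 sup t o') ==> (rank P t o <= rank P t o')%N)
        (ord_list n)].

Lemma ctargetE P sup t : target P (supply_of sup) t = ctarget P sup t.
Proof.
rewrite /target pick_ordE /ctarget; congr ohead; apply: eq_filter => o.
rewrite !ffunE; congr (_ && _); apply/forallP/allP => [all_o o' _|all_o o'].
  by have := all_o o'; rewrite !ffunE.
by rewrite !ffunE; apply: all_o; rewrite mem_ord_list.
Qed.

Section Step.
Variables (prof : 'I_n -> lexpref n p) (k : 'I_p).

Definition ctype (j : 'I_n) : 'I_p := imp (prof j) k.

Definition ccount (sup : table) (t : 'I_p) (o : 'I_n) : nat :=
  count (fun j : 'I_n => (ctype j == t) && (ctarget (prof j) sup (ctype j) == Some o))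
        (ord_list n).

(* Duration of the next event: the first exhaustion, or the end of the phase
   (the trivial filter mirrors the unconditional outer big operator). *)
Definition cdelta (tau : rat) (sup : table) : rat :=
  foldr Num.min tau [seq foldr Num.min tau
      [seq cell2 sup t o / (ccount sup t o)%:R | o : 'I_n <- ord_list n & ccount sup t o != 0%N]
    | t : 'I_p <- ord_list p & true].

Definition cstep (st : cstate) : cstate :=
  let: (tau, sup, eat) := st in
  let d := cdelta tau sup in
  (tau - d,
   tab (fun t : 'I_p => tab (fun o : 'I_n => cell2 sup t o - (ccount sup t o)%:R * d)),
   tab (fun j : 'I_n => tab (fun t : 'I_p => tab (fun o : 'I_n => cell3 eat j t o +
     (if (t == ctype j) && (ctarget (prof j) sup (ctype j) == Some o) then d else 0))))).

Lemma ccountE sup t o :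
  #|[set j | (ctype j == t) && (target (prof j) (supply_of sup) (ctype j) == Some o)]| =
  ccount sup t o.
Proof. by rewrite card_ord_count; apply: eq_count => j; rewrite ctargetE. Qed.

Lemma cdeltaE tau sup :
  \big[Num.min/tau]_(t < p) \big[Num.min/tau]_(o < n |
     #|[set j | (ctype j == t) && (target (prof j) (supply_of sup) (ctype j) == Some o)]| != 0%N)
     (supply_of sup t o /
      #|[set j | (ctype j == t) && (target (prof j) (supply_of sup) (ctype j) == Some o)]|%:R)
  = cdelta tau sup.
Proof.
rewrite big_ord_foldr /cdelta; congr foldr; apply: eq_map => t.
rewrite big_ord_foldr; congr foldr.
rewrite (@eq_filter _ _ (fun o => ccount sup t o != 0%N)) => [|o]; last by rewrite ccountE.
by apply: eq_map => o; rewrite ccountE !ffunE.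
Qed.

Lemma cstepE st : ps_step prof k (state_of st) = state_of (cstep st).
Proof.
case: st => [[tau sup] eat] /=; rewrite /ps_step /= cdeltaE.
congr (_, _, _); apply/ffunP => t; apply/ffunP => o.
  by rewrite !ffunE cell2_tab ccountE.
by apply/ffunP => o'; rewrite !ffunE cell3_tab ctargetE.
Qed.

Lemma iter_cstepE m st :
  iter m (ps_step prof k) (state_of st) = state_of (iter m cstep st).
Proof. by elim: m => [|m IHm] //; rewrite !iterS IHm cstepE. Qed.

End Step.

Definition cphase (prof : 'I_n -> lexpref n p) (k : 'I_p) (st : cstate) : cstate :=
  let: (_, sup, eat) := st in iter (n * p).+1 (cstep prof k) (1, sup, eat).

Lemma cphaseE prof k st : ps_phase prof k (state_of st) = state_of (cphase prof k st).
Proof.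
case: st => [[tau sup] eat]; rewrite /ps_phase /cphase /=.
exact: (iter_cstepE prof k (n * p).+1 (1, sup, eat)).
Qed.

Definition cinit : cstate :=
  (1, tab (fun _ : 'I_p => tab (fun _ : 'I_n => 1)),
      tab (fun _ : 'I_n => tab (fun _ : 'I_p => tab (fun _ : 'I_n => 0)))).

Definition ceaten (prof : 'I_n -> lexpref n p) : seq table :=
  (foldl (fun st k => cphase prof k st) cinit (ord_list p)).2.

Lemma lexips_eatenE prof : lexips_eaten prof = eaten_of (ceaten prof).
Proof.
have initE : ((1 : rat), [ffun _ => [ffun _ => 1]], [ffun _ => [ffun _ => [ffun _ => 0]]])
    = state_of cinit.
  congr (_, _, _); apply/ffunP => t; apply/ffunP => o; rewrite !ffunE ?cell2_tab //.
  by apply/ffunP => o'; rewrite !ffunE cell3_tab.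
rewrite /lexips_eaten /ceaten enum_ord_list initE.
by elim: (ord_list p) cinit => [|k ks IHks] st //; cbn [foldl]; rewrite cphaseE IHks.
Qed.

End ComputableEating.

Section LexicographicOrder.
Variables (n p : nat) (P : lexpref n p).
Implicit Types (x y a b : bundle n p).

Lemma lex_prefP x y :
  reflect (exists k, item_better P (imp P k) (x (imp P k)) (y (imp P k)) /\
             forall k' : 'I_p, (k' < k)%N -> x (imp P k') = y (imp P k'))
          (lex_pref P x y).
Proof.
apply: (iffP existsP) => [[k /andP[better /forallP agree]]|[k [better agree]]]; exists k.
  by split=> // k' lt_k'k; apply/eqP; exact: (implyP (agree k') lt_k'k).
by rewrite better; apply/forallP => k'; apply/implyP => /agree ->.
Qed.

Lemma lex_pref_neq x y : lex_pref P x y -> x != y.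
Proof.
by case/lex_prefP => k [better _]; apply: contraTneq better => ->; rewrite /item_better ltnn.
Qed.

(* The decisive type of x > z is the more important of those of x > y and
   y > z. *)
Lemma lex_pref_trans : transitive (lex_pref P).
Proof.
move=> y x z /lex_prefP[k1 [bxy exy]] /lex_prefP[k2 [byz eyz]]; apply/lex_prefP.
have [lt12|lt21|/val_inj eq12] := ltngtP k1 k2.
- exists k1; split; last by move=> k' lt; rewrite exy // eyz // (ltn_trans lt).
  by rewrite /item_better -(eyz _ lt12).
- exists k2; split; last by move=> k' lt; rewrite exy ?eyz // (ltn_trans lt).
  by rewrite /item_better (exy _ lt21).
- subst k2; exists k1; split; last by move=> k' lt; rewrite exy ?eyz.
  exact: ltn_trans bxy byz.
Qed.

Lemma upset_better x a b : lex_pref P a b -> b \in upset P x -> a \in upset P x.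
Proof.
move=> ab; rewrite !inE => /orP[bx|/eqP<-]; apply/orP; left => //.
exact: lex_pref_trans ab bx.
Qed.

Definition point_mass b : {ffun bundle n p -> rat} := [ffun y => (y == b)%:R].

Lemma sum_point_mass (U : {set bundle n p}) b : \sum_(y in U) point_mass b y = (b \in U)%:R.
Proof.
case: (boolP (b \in U)) => [bU|bNU].
  rewrite (bigD1 b) //= big1 ?ffunE ?eqxx ?addr0 // => y /andP[_ /negbTE].
  by rewrite ffunE => ->.
by rewrite big1 // => y yU; rewrite ffunE; case: eqP yU bNU => // ->->.
Qed.

(* Moving weight from b to a better bundle a yields a dominating lottery:
   every upper contour set containing b also contains a. *)
Lemma sd_weak_point_mass (f : {ffun bundle n p -> rat}) a b :
  lex_pref P a b -> (forall y, 0 <= f y) -> 1 <= f a + f b ->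
  sd_weak P f (point_mass b).
Proof.
move=> ab f_ge0 fab x; rewrite sum_point_mass.
have [bU|_] := boolP (b \in upset P x); last by apply: sumr_ge0.
rewrite (bigD1 a) ?(upset_better ab bU) //= (bigD1 b) /=; last first.
  by rewrite bU eq_sym lex_pref_neq.
by rewrite addrA (le_trans fab) // lerDl sumr_ge0.
Qed.

End LexicographicOrder.

Lemma lexips_point_mass n p (prof : 'I_n -> lexpref n p) j (b : bundle n p) :
  (forall i o, lexips_eaten prof j i o = (o == b i)%:R) -> lexips prof j = point_mass b.
Proof.
move=> shares; apply/ffunP => x; rewrite !ffunE.
under eq_bigr => i _ do rewrite shares.
have [->|neq_xb] := eqVneq x b; first by rewrite big1 // => i _; rewrite eqxx.
have /existsP[i neq_i] : [exists i, x i != b i].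
  apply: contraNT neq_xb => /existsPn agree.
  by apply/eqP/ffunP => i; apply/eqP/negPn/agree.
by rewrite (bigD1 i) //= (negbTE neq_i) mul0r.
Qed.

Definition item1 : 'I_2 := @Ordinal 2 0 isT.
Definition item2 : 'I_2 := @Ordinal 2 1 isT.

Definition truthful_bundle : bundle 2 3 :=
  [ffun t => if t == typT then item1 else item2].
Definition misreport_bundle : bundle 2 3 :=
  [ffun t => if t == typB then item2 else item1].

Lemma truthful_shares t o :
  lexips_eaten (profile2 pref_FBT pref_TFB) agent2 t o = (o == truthful_bundle t)%:R.
Proof.
rewrite lexips_eatenE !ffunE; apply/eqP; move: t o.
by apply: ord_list_all2; vm_compute.
Qed.

Lemma misreport_shares t o :
  lexips_eaten (profile2 pref_FBT pref_FTB) agent2 t o =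
  if t == typF then 2^-1 else (o == truthful_bundle t)%:R.
Proof.
rewrite lexips_eatenE !ffunE; apply/eqP; move: t o.
by apply: ord_list_all2; vm_compute.
Qed.

Lemma misreport_value (x : bundle 2 3) :
  (forall i, i != typF -> x i = truthful_bundle i) ->
  lexips (profile2 pref_FBT pref_FTB) agent2 x = 2^-1.
Proof.
move=> agree; rewrite ffunE (bigD1 typF) //= big1 ?mulr1 => [|i neqF].
  by rewrite misreport_shares eqxx.
by rewrite misreport_shares (negbTE neqF) agree // eqxx.
Qed.

Lemma misreport_ge0 (x : bundle 2 3) : 0 <= lexips (profile2 pref_FBT pref_FTB) agent2 x.
Proof.
rewrite ffunE; apply: prodr_ge0 => i _; rewrite misreport_shares.
by case: ifP => _; rewrite ?invr_ge0 ler0n.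
Qed.

Lemma misreport_bundle_agree i : i != typF -> misreport_bundle i = truthful_bundle i.
Proof. by rewrite !ffunE; case: i => [[|[|[|?]]] ?]. Qed.

(* For the true order T > F > B: equal on T, better on F. *)
Lemma misreport_bundle_better : lex_pref pref_TFB misreport_bundle truthful_bundle.
Proof.
apply/lex_prefP; exists (@Ordinal 3 1 isT); split; first by rewrite /item_better /= !ffunE.
by move=> [[|?] ?] //= _; rewrite !ffunE.
Qed.

Theorem mainTheorem5 :
  let truthful := profile2 pref_FBT pref_TFB in
  let misreport := profile2 pref_FBT pref_FTB in
  sd_weak pref_TFB (lexips misreport agent2) (lexips truthful agent2) /\
  lexips misreport agent2 <> lexips truthful agent2.
Proof.
move=> truthful misreport.
have half_misreport := misreport_value misreport_bundle_agree.
have half_truthful := @misreport_value truthful_bundle (fun _ _ => erefl).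
rewrite (lexips_point_mass truthful_shares); split.
  apply: sd_weak_point_mass misreport_bundle_better misreport_ge0 _.
  by rewrite half_misreport half_truthful; vm_compute.
move=> /ffunP /(_ misreport_bundle) /eqP.
by rewrite half_misreport ffunE (negbTE (lex_pref_neq misreport_bundle_better)) invr_eq0.
Qed.
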